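(* Let $T=(\{T_g\}_{g\in G},\{\gamma_{g,h}\}_{g,h\in G},u)$ be a partial action of a group $G$ on a (strict) monoidal category $\mathcal{C}$ generated by central idempotent objects $\{\mathbb{1}_g\}_{g\in G}$, and let $\Phi\colon\mathcal{C}\to[G,\mathcal{C}]$, $\bullet$ and $\mathcal{T}_g$ be as described in the context. Then: (1) for all objects $X,Y$ of $\mathcal{C}$ and $g\in G$ there are natural isomorphisms $$\Phi(X)\bullet\mathcal{T}_g(\Phi(Y))\cong\Phi\big(X\otimes T_g(\mathbb{1}_{g^{-1}}\otimes Y)\big)\quad\text{and}\quad\mathcal{T}_g(\Phi(X))\bullet\Phi(Y)\cong\Phi\big(T_g(\mathbb{1}_{g^{-1}}\otimes X)\otimes Y\big);$$ (2) for all objects $X,Y$ of $\mathcal{C}$ and $g,h\in G$ there is a natural isomorphism $$\mathcal{T}_g(\Phi(X))\bullet\mathcal{T}_h(\Phi(Y))\cong\mathcal{T}_g\Phi\big(X\otimes T_{g^{-1}h}(\mathbb{1}_{h^{-1}g}\otimes Y)\big).$$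
   Context: Central idempotent: an object $e$ with an isomorphism $\Phi_e\colon e\otimes e\to e$ and a natural isomorphism $\sigma^e\colon e\otimes-\Rightarrow-\otimes e$ satisfying $\Phi_e(e\otimes\Phi_e)=\Phi_e(\Phi_e\otimes e)$, $\Phi_e\sigma^e_e=\Phi_e$, $(A\otimes\Phi_e)(\sigma^e_A\otimes e)(e\otimes\sigma^e_A)=\sigma^e_A(\Phi_e\otimes A)$, $\sigma^e_{A\otimes B}=(A\otimes\sigma^e_B)(\sigma^e_A\otimes B)$. For a subcategory $\mathcal{D}$, $\overline{\mathcal{D}}$ is the smallest subcategory containing $\mathcal{D}$ and closed under isomorphisms; $e\otimes\mathcal{C}$ is the subcategory of objects $e\otimes X$ and morphisms $e\otimes f$; $\overline{e\otimes\mathcal{C}}$ is an ideal and a monoidal category with unit $e$. A partial action of $G$ on $\mathcal{C}$ generated by central idempotents $\{\mathbb{1}_g\}$: ideals $\mathcal{C}_g=\overline{\mathbb{1}_g\otimes\mathcal{C}}$ with $\mathbb{1}_e=\mathbb{1}$; monoidal equivalences $(T_g,J^g)\colon\mathcal{C}_{g^{-1}}\to\mathcal{C}_g$ (with unit isomorphisms $\varphi^g\colon\mathbb{1}_g\to T_g(\mathbb{1}_{g^{-1}})$) whose restrictions to $\mathcal{C}_{g^{-1}}\cap\mathcal{C}_h$ are monoidal equivalences onto $\mathcal{C}_g\cap\mathcal{C}_{gh}$; a natural isomorphism of semigroupal functors $u\colon\mathrm{Id}_{\mathcal{C}}\Rightarrow T_e$; natural isomorphisms $\gamma_{g,h}\colon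 T_gT_h\Rightarrow T_{gh}$ on $\mathcal{C}_{h^{-1}}\cap\mathcal{C}_{h^{-1}g^{-1}}$ compatible with the $J$'s; with the associativity condition $(\gamma_{gh,k})_X(\gamma_{g,h})_{T_kX}=(\gamma_{g,hk})_XT_g((\gamma_{h,k})_X)$ and the unit conditions ($u_{T_gX}$ inverse to $(\gamma_{e,g})_X$, $T_g(u_X)$ inverse to $(\gamma_{g,e})_X$). Regard $G$ as a discrete category $\underline{G}$ (objects the elements of $G$, only identity morphisms) and let $[G,\mathcal{C}]$ be the category of functors $\underline{G}\to\mathcal{C}$ with natural transformations. It has the pointwise tensor product $(F_1\bullet F_2)(g)=F_1(g)\otimes F_2(g)$, $(\alpha_1\bullet\alpha_2)_g=(\alpha_1)_g\otimes(\alpha_2)_g$. For $g\in G$ and $F\in[G,\mathcal{C}]$ define $\mathcal{T}_g(F)(h)=F(hg)$. Define $\Phi\colon\mathcal{C}\to[G,\mathcal{C}]$ by $\Phi(X)(g)=T_g(\mathbb{1}_{g^{-1}}\otimes X)$ and $\Phi(f)_g=T_g(\mathbb{1}_{g^{-1}}\otimes f)$. *)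

From Stdlib Require Import ClassicalEpsilon.
Set Implicit Arguments.
Unset Strict Implicit.

Record Group := {
  gcar :> Type;
  gmul : gcar -> gcar -> gcar;
  gone : gcar;
  ginv : gcar -> gcar;
  gmulA : forall a b c, gmul a (gmul b c) = gmul (gmul a b) c;
  gmul1l : forall a, gmul gone a = a;
  gmul1r : forall a, gmul a gone = a;
  gmulVl : forall a, gmul (ginv a) a = gone;
  gmulVr : forall a, gmul a (ginv a) = gone }.
Arguments gmul {g}.
Arguments gone {g}.
Arguments ginv {g}.

Record MonCat := {
  Obj :> Type;
  Hom : Obj -> Obj -> Type;
  idm : forall A, Hom A A;
  comp : forall A B D, Hom B D -> Hom A B -> Hom A D;
  tens : Obj -> Obj -> Obj;
  tensm : forall A B A' B', Hom A B -> Hom A' B' -> Hom (tens A A') (tens B B');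
  munit : Obj;
  alpha : forall A B D, Hom (tens (tens A B) D) (tens A (tens B D));
  alphai : forall A B D, Hom (tens A (tens B D)) (tens (tens A B) D);
  lam : forall A, Hom (tens munit A) A;
  lami : forall A, Hom A (tens munit A);
  rho : forall A, Hom (tens A munit) A;
  rhoi : forall A, Hom A (tens A munit) }.
Arguments Hom {m}.
Arguments idm {m}.
Arguments comp {m A B D}.
Arguments tens {m}.
Arguments tensm {m A B A' B'}.
Arguments munit m : assert.
Arguments alpha {m}.
Arguments alphai {m}.
Arguments lam {m}.
Arguments lami {m}.
Arguments rho {m}.
Arguments rhoi {m}.

Declare Scope moncat_scope.
Delimit Scope moncat_scope with MC.
Open Scope moncat_scope.
Notation "g ∘ f" := (comp g f) (at level 40, left associativity) : moncat_scope.
Notation "A ⊗ B" := (tens A B) (at level 33, left associativity) : moncat_scope.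
Notation "f ⊗ₘ g" := (tensm f g) (at level 33, left associativity) : moncat_scope.

Record is_moncat (C : MonCat) : Prop := {
  comp_idl : forall (A B : C) (f : Hom A B), idm B ∘ f = f;
  comp_idr : forall (A B : C) (f : Hom A B), f ∘ idm A = f;
  compA : forall (A B D E : C) (f : Hom A B) (g : Hom B D) (h : Hom D E),
      h ∘ (g ∘ f) = (h ∘ g) ∘ f;
  tensm_id : forall A B : C, idm A ⊗ₘ idm B = idm (A ⊗ B);
  tensm_comp : forall (A B D A' B' D' : C) (f : Hom A B) (g : Hom B D)
      (f' : Hom A' B') (g' : Hom B' D'),
      (g ∘ f) ⊗ₘ (g' ∘ f') = (g ⊗ₘ g') ∘ (f ⊗ₘ f');
  alpha_inv1 : forall A B D : C, alphai A B D ∘ alpha A B D = idm _;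
  alpha_inv2 : forall A B D : C, alpha A B D ∘ alphai A B D = idm _;
  alpha_nat : forall (A A' B B' D D' : C) (f : Hom A A') (g : Hom B B') (h : Hom D D'),
      alpha A' B' D' ∘ ((f ⊗ₘ g) ⊗ₘ h) = (f ⊗ₘ (g ⊗ₘ h)) ∘ alpha A B D;
  lam_inv1 : forall A : C, lami A ∘ lam A = idm _;
  lam_inv2 : forall A : C, lam A ∘ lami A = idm _;
  lam_nat : forall (A B : C) (f : Hom A B), lam B ∘ (idm (munit C) ⊗ₘ f) = f ∘ lam A;
  rho_inv1 : forall A : C, rhoi A ∘ rho A = idm _;
  rho_inv2 : forall A : C, rho A ∘ rhoi A = idm _;
  rho_nat : forall (A B : C) (f : Hom A B), rho B ∘ (f ⊗ₘ idm (munit C)) = f ∘ rho A;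
  pentagon : forall A B D E : C,
      alpha A B (D ⊗ E) ∘ alpha (A ⊗ B) D E
      = (idm A ⊗ₘ alpha B D E) ∘ alpha A (B ⊗ D) E ∘ (alpha A B D ⊗ₘ idm E);
  triangle : forall A B : C,
      (idm A ⊗ₘ lam B) ∘ alpha A (munit C) B = rho A ⊗ₘ idm B }.

Definition hcast {C : MonCat} {A B : C} (e : A = B) : Hom A B :=
  match e in _ = B' return Hom A B' with eq_refl => idm A end.

Definition strict (C : MonCat) : Prop :=
  exists (ea : forall A B D : C, A ⊗ B ⊗ D = A ⊗ (B ⊗ D))
         (el : forall A : C, munit C ⊗ A = A)
         (er : forall A : C, A ⊗ munit C = A),
    (forall A B D, alpha A B D = hcast (ea A B D)) /\
    (forall A, lam A = hcast (el A)) /\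
    (forall A, rho A = hcast (er A)).

Definition is_iso {C : MonCat} {A B : C} (f : Hom A B) : Prop :=
  exists g : Hom B A, g ∘ f = idm A /\ f ∘ g = idm B.

Definition isoP {C : MonCat} (A B : C) : Prop := exists f : Hom A B, is_iso f.

Definition bij {T U : Type} (F : T -> U) : Prop :=
  exists F' : U -> T, (forall x, F' (F x) = x) /\ (forall y, F (F' y) = y).

Record CIdem (C : MonCat) (e : C) := {
  ci_Phi : Hom (e ⊗ e) e;
  ci_Phii : Hom e (e ⊗ e);
  ci_sig : forall A : C, Hom (e ⊗ A) (A ⊗ e);
  ci_sigi : forall A : C, Hom (A ⊗ e) (e ⊗ A) }.

Definition is_cidem {C : MonCat} {e : C} (d : CIdem e) : Prop :=
  let Phi := ci_Phi d in let sig := ci_sig d in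
  (ci_Phii d ∘ Phi = idm _ /\ Phi ∘ ci_Phii d = idm e) /\
  (forall A, ci_sigi d A ∘ sig A = idm _ /\ sig A ∘ ci_sigi d A = idm _) /\
  (forall (A B : C) (f : Hom A B), (f ⊗ₘ idm e) ∘ sig A = sig B ∘ (idm e ⊗ₘ f)) /\
  Phi ∘ (idm e ⊗ₘ Phi) ∘ alpha e e e = Phi ∘ (Phi ⊗ₘ idm e) /\
  Phi ∘ sig e = Phi /\
  (forall A : C,
     (idm A ⊗ₘ Phi) ∘ alpha A e e ∘ (sig A ⊗ₘ idm e) ∘ alphai e A e
       ∘ (idm e ⊗ₘ sig A) ∘ alpha e e A
     = sig A ∘ (Phi ⊗ₘ idm A)) /\
  (forall A B : C,
     sig (A ⊗ B) = alphai A B e ∘ (idm A ⊗ₘ sig B) ∘ alpha A e B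
                     ∘ (sig A ⊗ₘ idm B) ∘ alphai e A B).

Section Ideal.
Context {C : MonCat}.

(* objects of overline(e ⊗ C) (a full subcategory) *)
Definition Cid (e X : C) : Prop := exists Y : C, isoP X (e ⊗ Y).

Lemma cid_in (L : is_moncat C) (e X : C) : Cid e (e ⊗ X).
Proof.
  exists X, (idm _), (idm _); split; apply (comp_idl L).
Qed.

(* chosen presentation X ≅ e ⊗ Y (used only to write the unitors) *)
Definition cid_sig {e X : C} (h : Cid e X) : {Y : C | isoP X (e ⊗ Y)} :=
  constructive_indefinite_description _ h.
Definition cid_obj {e X : C} (h : Cid e X) : C := proj1_sig (cid_sig h).
Definition cid_fsig {e X : C} (h : Cid e X) : {f : Hom X (e ⊗ cid_obj h) | is_iso f} :=
  constructive_indefinite_description _ (proj2_sig (cid_sig h)).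
Definition cid_f {e X : C} (h : Cid e X) : Hom X (e ⊗ cid_obj h) := proj1_sig (cid_fsig h).
Definition cid_gsig {e X : C} (h : Cid e X) :
  {g : Hom (e ⊗ cid_obj h) X | g ∘ cid_f h = idm X /\ cid_f h ∘ g = idm _} :=
  constructive_indefinite_description _ (proj2_sig (cid_fsig h)).
Definition cid_g {e X : C} (h : Cid e X) : Hom (e ⊗ cid_obj h) X := proj1_sig (cid_gsig h).

(* left and right unitors of the monoidal category (overline(e ⊗ C), ⊗, e) *)
Definition lunit {e : C} (d : CIdem e) {X : C} (h : Cid e X) : Hom (e ⊗ X) X :=
  cid_g h ∘ (ci_Phi d ⊗ₘ idm (cid_obj h)) ∘ alphai e e (cid_obj h) ∘ (idm e ⊗ₘ cid_f h).
Definition runit {e : C} (d : CIdem e) {X : C} (h : Cid e X) : Hom (X ⊗ e) X :=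
  cid_g h ∘ (ci_Phi d ⊗ₘ idm (cid_obj h)) ∘ alphai e e (cid_obj h)
    ∘ (idm e ⊗ₘ ci_sigi d (cid_obj h)) ∘ alpha e (cid_obj h) e ∘ (cid_f h ⊗ₘ idm e).
End Ideal.

Record PAData (C : MonCat) (G : Group) := {
  pa_one : G -> C;
  pa_ci : forall g, CIdem (pa_one g);
  pa_T : G -> C -> C;                                (* T_g on objects of C_{g^-1} *)
  pa_Tm : forall (g : G) (X Y : C), Cid (pa_one (ginv g)) X -> Cid (pa_one (ginv g)) Y ->
          Hom X Y -> Hom (pa_T g X) (pa_T g Y);
  pa_J : forall (g : G) (X Y : C), Hom (pa_T g X ⊗ pa_T g Y) (pa_T g (X ⊗ Y));
  pa_phi : forall g : G, Hom (pa_one g) (pa_T g (pa_one (ginv g)));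
  pa_u : forall X : C, Hom X (pa_T gone X);
  pa_gamma : forall (g h : G) (X : C), Hom (pa_T g (pa_T h X)) (pa_T (gmul g h) X) }.

Arguments pa_one {C G}.
Arguments pa_ci {C G}.
Arguments pa_T {C G}.
Arguments pa_Tm {C G} p g {X Y}.
Arguments pa_J {C G}.
Arguments pa_phi {C G}.
Arguments pa_u {C G}.
Arguments pa_gamma {C G}.

Section PartialAction.
Context {C : MonCat} {G : Group} (d : PAData C G).

Local Notation one := (pa_one d).
Local Notation Cg g := (Cid (pa_one d g)).
Local Notation T := (pa_T d).
Local Notation Tm := (pa_Tm d).
Local Notation J := (pa_J d).
Local Notation u := (pa_u d).
Local Notation gam := (pa_gamma d).
Local Notation ci g := (pa_ci d g).

Definition tcast {a b : G} (e : a = b) (X : C) : Hom (T a X) (T b X) :=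
  match e in _ = b' return Hom (T a X) (T b' X) with eq_refl => idm _ end.

Record is_partial_action : Prop := {
  pa_ci_ok : forall g, is_cidem (ci g);
  pa_one_e : one gone = munit C;
  pa_T_in : forall (g : G) (X : C), Cg (ginv g) X -> Cg g (T g X);
  pa_Tm_id : forall (g : G) (X : C) (h1 h2 : Cg (ginv g) X), Tm g h1 h2 (idm X) = idm (T g X);
  pa_Tm_comp : forall (g : G) (X Y Z : C) hX hY hZ (f : Hom X Y) (k : Hom Y Z),
      Tm g hX hZ (k ∘ f) = Tm g hY hZ k ∘ Tm g hX hY f;
  pa_Tm_ff : forall (g : G) (X Y : C) (hX : Cg (ginv g) X) (hY : Cg (ginv g) Y),
      bij (Tm g hX hY);
  pa_T_esurj : forall (g : G) (Z : C), Cg g Z -> exists X, Cg (ginv g) X /\ isoP (T g X) Z;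
  pa_J_iso : forall (g : G) (X Y : C), Cg (ginv g) X -> Cg (ginv g) Y -> is_iso (J g X Y);
  pa_J_nat : forall (g : G) (X X' Y Y' : C) hX hX' hY hY' (hXY : Cg (ginv g) (X ⊗ Y))
      (hXY' : Cg (ginv g) (X' ⊗ Y')) (f : Hom X X') (f' : Hom Y Y'),
      Tm g hXY hXY' (f ⊗ₘ f') ∘ J g X Y = J g X' Y' ∘ (Tm g hX hX' f ⊗ₘ Tm g hY hY' f');
  pa_J_assoc : forall (g : G) (X Y Z : C), Cg (ginv g) X -> Cg (ginv g) Y -> Cg (ginv g) Z ->
      forall (h1 : Cg (ginv g) (X ⊗ Y ⊗ Z)) (h2 : Cg (ginv g) (X ⊗ (Y ⊗ Z))),
      Tm g h1 h2 (alpha X Y Z) ∘ J g (X ⊗ Y) Z ∘ (J g X Y ⊗ₘ idm (T g Z))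
      = J g X (Y ⊗ Z) ∘ (idm (T g X) ⊗ₘ J g Y Z) ∘ alpha (T g X) (T g Y) (T g Z);
  pa_phi_iso : forall g : G, is_iso (pa_phi d g);
  pa_unit_l : forall (g : G) (X : C) (hX : Cg (ginv g) X) (h1 : Cg (ginv g) (one (ginv g) ⊗ X))
      (hTX : Cg g (T g X)),
      Tm g h1 hX (lunit (ci (ginv g)) hX) ∘ J g (one (ginv g)) X ∘ (pa_phi d g ⊗ₘ idm (T g X))
      = lunit (ci g) hTX;
  pa_unit_r : forall (g : G) (X : C) (hX : Cg (ginv g) X) (h1 : Cg (ginv g) (X ⊗ one (ginv g)))
      (hTX : Cg g (T g X)),
      Tm g h1 hX (runit (ci (ginv g)) hX) ∘ J g X (one (ginv g)) ∘ (idm (T g X) ⊗ₘ pa_phi d g)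
      = runit (ci g) hTX;
  pa_restr : forall (g h : G) (X : C), Cg (ginv g) X -> Cg h X -> Cg (gmul g h) (T g X);
  pa_restr_esurj : forall (g h : G) (Z : C), Cg g Z -> Cg (gmul g h) Z ->
      exists X, Cg (ginv g) X /\ Cg h X /\ isoP (T g X) Z;
  pa_u_iso : forall X : C, Cg (ginv gone) X -> is_iso (u X);
  pa_u_nat : forall (X Y : C) (hX : Cg (ginv gone) X) (hY : Cg (ginv gone) Y) (f : Hom X Y),
      Tm gone hX hY f ∘ u X = u Y ∘ f;
  pa_u_mon : forall X Y : C, u (X ⊗ Y) = J gone X Y ∘ (u X ⊗ₘ u Y);
  pa_gamma_iso : forall (g h : G) (X : C), Cg (ginv h) X -> Cg (gmul (ginv h) (ginv g)) X ->
      is_iso (gam g h X);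
  pa_gamma_nat : forall (g h : G) (X Y : C),
      Cg (ginv h) X -> Cg (gmul (ginv h) (ginv g)) X ->
      forall (hX : Cg (ginv h) X) (hY : Cg (ginv h) Y), Cg (gmul (ginv h) (ginv g)) Y ->
      forall (p1 : Cg (ginv g) (T h X)) (p2 : Cg (ginv g) (T h Y))
             (q1 : Cg (ginv (gmul g h)) X) (q2 : Cg (ginv (gmul g h)) Y) (f : Hom X Y),
      gam g h Y ∘ Tm g p1 p2 (Tm h hX hY f) = Tm (gmul g h) q1 q2 f ∘ gam g h X;
  pa_gamma_J : forall (g h : G) (X Y : C),
      Cg (ginv h) X -> Cg (gmul (ginv h) (ginv g)) X ->
      Cg (ginv h) Y -> Cg (gmul (ginv h) (ginv g)) Y ->
      forall (p1 : Cg (ginv g) (T h X ⊗ T h Y)) (p2 : Cg (ginv g) (T h (X ⊗ Y))),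
      gam g h (X ⊗ Y) ∘ Tm g p1 p2 (J h X Y) ∘ J g (T h X) (T h Y)
      = J (gmul g h) X Y ∘ (gam g h X ⊗ₘ gam g h Y);
  pa_gamma_assoc : forall (g h k : G) (X : C),
      Cg (ginv k) X -> Cg (gmul (ginv k) (ginv h)) X ->
      Cg (gmul (gmul (ginv k) (ginv h)) (ginv g)) X ->
      forall (p1 : Cg (ginv g) (T h (T k X))) (p2 : Cg (ginv g) (T (gmul h k) X)),
      gam (gmul g h) k X ∘ gam g h (T k X)
      = tcast (gmulA g h k) X ∘ gam g (gmul h k) X ∘ Tm g p1 p2 (gam h k X);
  pa_unit_e_l : forall (g : G) (X : C), Cg (ginv g) X ->
      tcast (gmul1l g) X ∘ gam gone g X ∘ u (T g X) = idm (T g X) /\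
      u (T g X) ∘ tcast (gmul1l g) X ∘ gam gone g X = idm (T gone (T g X));
  pa_unit_e_r : forall (g : G) (X : C), Cg (ginv g) X ->
      forall (p1 : Cg (ginv g) X) (p2 : Cg (ginv g) (T gone X)),
      tcast (gmul1r g) X ∘ gam g gone X ∘ Tm g p1 p2 (u X) = idm (T g X) /\
      Tm g p1 p2 (u X) ∘ tcast (gmul1r g) X ∘ gam g gone X = idm (T g (T gone X)) }.

Definition GHom (F F' : G -> C) : Type := forall h : G, Hom (F h) (F' h).

Definition bul (F1 F2 : G -> C) : G -> C := fun h => F1 h ⊗ F2 h.
Definition bulm {F1 F1' F2 F2' : G -> C} (a1 : GHom F1 F1') (a2 : GHom F2 F2') :
  GHom (bul F1 F2) (bul F1' F2') := fun h => a1 h ⊗ₘ a2 h.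

Definition TT (g : G) (F : G -> C) : G -> C := fun h => F (gmul h g).
Definition TTm (g : G) {F F' : G -> C} (a : GHom F F') : GHom (TT g F) (TT g F') :=
  fun h => a (gmul h g).

Definition PhiO (X : C) : G -> C := fun h => T h (one (ginv h) ⊗ X).
Definition PhiM (L : is_moncat C) {X Y : C} (f : Hom X Y) : GHom (PhiO X) (PhiO Y) :=
  fun h => Tm h (cid_in L (one (ginv h)) X) (cid_in L (one (ginv h)) Y) (idm _ ⊗ₘ f).

End PartialAction.

Definition nat_iso2 {C : MonCat} {G : Group} (Fo Go : C -> C -> G -> C)
  (Fm : forall X X' Y Y' : C, Hom X X' -> Hom Y Y' -> GHom (Fo X Y) (Fo X' Y'))
  (Gm : forall X X' Y Y' : C, Hom X X' -> Hom Y Y' -> GHom (Go X Y) (Go X' Y')) : Prop :=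
  exists eta : forall X Y : C, GHom (Fo X Y) (Go X Y),
    (forall X Y h, is_iso (eta X Y h)) /\
    (forall (X X' Y Y' : C) (f : Hom X X') (f' : Hom Y Y') h,
        Gm X X' Y Y' f f' h ∘ eta X Y h = eta X' Y' h ∘ Fm X X' Y Y' f f' h).
Arguments nat_iso2 {C G} Fo Go Fm Gm.

From Stdlib Require Import ClassicalEpsilon.
Set Implicit Arguments.
Unset Strict Implicit.

(* Phi(X)(h) = T_h(1_{h^-1} ⊗ X) lies in the ideal C_h, on which 1_h acts as a unit.  The
   key isomorphism is
     1_h ⊗ T_{hg}(1_{(hg)^-1} ⊗ Y) ≅ T_h(1_{h^-1} ⊗ T_g(1_{g^-1} ⊗ Y)),
   obtained from gamma_{h,g}, the monoidal structures J of T_g and T_{hg}, and the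
   identification T_k(1_{k^-1} ⊗ 1_m) ≅ 1_k ⊗ 1_{km} coming from the restriction of T_k to
   C_{k^-1} ∩ C_m.  Inserting 1_h next to Phi(X)(h) and pulling both factors inside T_h with
   J^h then gives Phi(X)(h) ⊗ Phi(Y)(hg) ≅ Phi(X ⊗ Phi(Y)(g))(h), which is (1); (2) is the
   instance (h, g) := (kg, g^-1 h).  Every isomorphism is assembled from natural ones,
   uniformly over diagrams indexed by a quiver, so naturality in X and Y comes for free. *)

Section GroupFacts.
Variable G : Group.

Lemma ginv_unique (x y : G) : gmul x y = gone -> y = ginv x.
Proof. intros H. rewrite <- (gmul1l y), <- (gmulVl x), <- gmulA, H. apply gmul1r. Qed.

Lemma ginvM (h g : G) : ginv (gmul h g) = gmul (ginv g) (ginv h).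
Proof.
  symmetry. apply ginv_unique.
  rewrite gmulA, <- (gmulA h g), gmulVr, gmul1r. apply gmulVr.
Qed.

Lemma gmulK (h g : G) : gmul (gmul h g) (ginv g) = h.
Proof. rewrite <- gmulA, gmulVr. apply gmul1r. Qed.

Lemma gmul_ginvM (h g : G) : gmul g (ginv (gmul h g)) = ginv h.
Proof. rewrite ginvM, gmulA, gmulVr. apply gmul1l. Qed.

Lemma gmul_split (k g h : G) : gmul k h = gmul (gmul k g) (gmul (ginv g) h).
Proof. rewrite <- gmulA, (gmulA g), gmulVr, gmul1l. reflexivity. Qed.

End GroupFacts.

Section Monoidal.
Context {C : MonCat} (L : is_moncat C).

Lemma iso_id (A : C) : is_iso (idm A).
Proof. exists (idm A). split; apply (comp_idl L). Qed.

Lemma iso_comp (A B D : C) (f : Hom A B) (g : Hom B D) :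
  is_iso f -> is_iso g -> is_iso (g ∘ f).
Proof.
  intros [f' [Hf1 Hf2]] [g' [Hg1 Hg2]]. exists (f' ∘ g'). split.
  - rewrite (compA L), <- (compA L g g' f'), Hg1, (comp_idr L). exact Hf1.
  - rewrite (compA L), <- (compA L f' f g), Hf2, (comp_idr L). exact Hg2.
Qed.

Lemma iso_tens (A B A' B' : C) (f : Hom A B) (g : Hom A' B') :
  is_iso f -> is_iso g -> is_iso (f ⊗ₘ g).
Proof.
  intros [f' [Hf1 Hf2]] [g' [Hg1 Hg2]]. exists (f' ⊗ₘ g').
  rewrite <- !(tensm_comp L), Hf1, Hf2, Hg1, Hg2, !(tensm_id L). split; reflexivity.
Qed.

Lemma alpha_iso (A B D : C) : is_iso (alpha A B D).
Proof. exists (alphai A B D). split; [apply (alpha_inv1 L) | apply (alpha_inv2 L)]. Qed.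

Lemma alphai_iso (A B D : C) : is_iso (alphai A B D).
Proof. exists (alpha A B D). split; [apply (alpha_inv2 L) | apply (alpha_inv1 L)]. Qed.

Lemma isoP_of (A B : C) (f : Hom A B) : is_iso f -> isoP A B.
Proof. intros H. exists f. exact H. Qed.

Lemma isoP_refl (A : C) : isoP A A.
Proof. apply isoP_of with (idm A), iso_id. Qed.

Lemma isoP_sym (A B : C) : isoP A B -> isoP B A.
Proof. intros [f [g [H1 H2]]]. exists g, f. auto. Qed.

Lemma isoP_trans (A B D : C) : isoP A B -> isoP B D -> isoP A D.
Proof. intros [f Hf] [g Hg]. apply isoP_of with (g ∘ f), iso_comp; assumption. Qed.

Lemma isoP_tens (A B A' B' : C) : isoP A B -> isoP A' B' -> isoP (A ⊗ A') (B ⊗ B').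
Proof. intros [f Hf] [g Hg]. apply isoP_of with (f ⊗ₘ g), iso_tens; assumption. Qed.

Lemma cid_tensr (e X Y : C) : Cid e X -> Cid e (X ⊗ Y).
Proof.
  intros [Z HZ]. exists (Z ⊗ Y). eapply isoP_trans.
  - apply isoP_tens; [exact HZ | apply isoP_refl].
  - apply isoP_of with (alpha _ _ _), alpha_iso.
Qed.

Section Diagrams.
Context {I : Type} (M : I -> I -> Type).

Record diagram := Diagram {
  dobj : I -> C;
  dmap : forall i j, M i j -> Hom (dobj i) (dobj j) }.

Definition natiso (F H : diagram) : Prop :=
  exists eta : forall i, Hom (dobj F i) (dobj H i),
    (forall i, is_iso (eta i)) /\
    (forall i j (m : M i j), dmap H m ∘ eta i = eta j ∘ dmap F m).

Lemma natiso_refl (F : diagram) : natiso F F.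
Proof.
  exists (fun i => idm _). split; [intros; apply iso_id |].
  intros. rewrite (comp_idl L), (comp_idr L). reflexivity.
Qed.

Lemma natiso_sym (F H : diagram) : natiso F H -> natiso H F.
Proof.
  intros [eta [Hiso Hnat]].
  set (inv := fun i => constructive_indefinite_description _ (Hiso i)).
  exists (fun i => proj1_sig (inv i)). split.
  - intros i. destruct (inv i) as [g [H1 H2]]. exists (eta i). auto.
  - intros i j m. destruct (inv i) as [gi [H1 H2]], (inv j) as [gj [H3 H4]]; simpl.
    rewrite <- (comp_idl L (dmap F m ∘ gi)), <- H3, <- !(compA L), (compA L gi), <- Hnat,
      <- (compA L), H2, (comp_idr L).
    reflexivity.
Qed.

Lemma natiso_trans (F H K : diagram) : natiso F H -> natiso H K -> natiso F K.
Proof.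
  intros [e1 [I1 N1]] [e2 [I2 N2]]. exists (fun i => e2 i ∘ e1 i). split.
  - intros; apply iso_comp; auto.
  - intros i j m. rewrite (compA L), N2, <- (compA L), N1, (compA L). reflexivity.
Qed.

Definition dtens (F H : diagram) : diagram :=
  @Diagram (fun i => dobj F i ⊗ dobj H i) (fun i j m => dmap F m ⊗ₘ dmap H m).

Definition dconst (A : C) : diagram := @Diagram (fun _ => A) (fun _ _ _ => idm A).

Lemma natiso_tens (F F' H H' : diagram) :
  natiso F H -> natiso F' H' -> natiso (dtens F F') (dtens H H').
Proof.
  intros [e1 [I1 N1]] [e2 [I2 N2]]. exists (fun i => e1 i ⊗ₘ e2 i). split.
  - intros; apply iso_tens; auto.
  - intros i j m; simpl. rewrite <- !(tensm_comp L), N1, N2. reflexivity.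
Qed.

Lemma natiso_assoc (F H K : diagram) :
  natiso (dtens (dtens F H) K) (dtens F (dtens H K)).
Proof.
  exists (fun i => alpha _ _ _). split; [intros; apply alpha_iso |].
  intros i j m; simpl. symmetry. apply (alpha_nat L).
Qed.

Lemma natiso_const (A B : C) : isoP A B -> natiso (dconst A) (dconst B).
Proof.
  intros [f Hf]. exists (fun _ => f). split; [auto |].
  intros; simpl. rewrite (comp_idl L), (comp_idr L). reflexivity.
Qed.

Lemma natiso_const_tens (A B : C) : natiso (dtens (dconst A) (dconst B)) (dconst (A ⊗ B)).
Proof.
  exists (fun _ => idm _). split; [intros; apply iso_id |].
  intros; simpl. rewrite (tensm_id L), !(comp_idl L). reflexivity.
Qed.

End Diagrams.

Arguments Diagram {I M} dobj dmap.
Arguments dconst {I M} A.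

Definition hom2 (p q : C * C) : Type := (Hom (fst p) (fst q) * Hom (snd p) (snd q))%type.

Definition dfst : diagram hom2 := Diagram (fun p => fst p) (fun p q m => fst m).
Definition dsnd : diagram hom2 := Diagram (fun p => snd p) (fun p q m => snd m).

Lemma nat_iso2_of_natiso {G : Group} (Fo Go : C -> C -> G -> C)
  (Fm : forall X X' Y Y' : C, Hom X X' -> Hom Y Y' -> GHom (Fo X Y) (Fo X' Y'))
  (Gm : forall X X' Y Y' : C, Hom X X' -> Hom Y Y' -> GHom (Go X Y) (Go X' Y')) :
  (forall h : G,
     natiso
       (Diagram (fun p => Fo (fst p) (snd p) h) (fun p q m => Fm _ _ _ _ (fst m) (snd m) h))
       (Diagram (fun p => Go (fst p) (snd p) h) (fun p q m => Gm _ _ _ _ (fst m) (snd m) h))) ->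
  nat_iso2 Fo Go Fm Gm.
Proof.
  intros H.
  set (eta := fun h => constructive_indefinite_description _ (H h)).
  exists (fun X Y h => proj1_sig (eta h) (X, Y)). split.
  - intros X Y h. apply (proj1 (proj2_sig (eta h)) (X, Y)).
  - intros X X' Y Y' f f' h. apply (proj2 (proj2_sig (eta h)) (X, Y) (X', Y') (f, f')).
Qed.

Section CentralIdempotent.
Context {e : C} {ci : CIdem e} (Hci : is_cidem ci).

Lemma cidem_mult_iso : is_iso (ci_Phi ci).
Proof. destruct Hci as [[H1 H2] _]. exists (ci_Phii ci). auto. Qed.

Lemma cidem_sig_iso (A : C) : is_iso (ci_sig ci A).
Proof. destruct Hci as [_ [Hsig _]]. exists (ci_sigi ci A). apply Hsig. Qed.

Lemma cidem_sigi_iso (A : C) : is_iso (ci_sigi ci A).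
Proof. destruct Hci as [_ [Hsig _]]. exists (ci_sig ci A). split; apply Hsig. Qed.

Lemma cid_unit : Cid e e.
Proof. exists e. apply isoP_sym, isoP_of with (ci_Phi ci), cidem_mult_iso. Qed.

Lemma cid_tensl (X Y : C) : Cid e Y -> Cid e (X ⊗ Y).
Proof.
  intros [Z HZ]. exists (X ⊗ Z).
  eapply isoP_trans; [apply isoP_tens; [apply isoP_refl | exact HZ] |].
  eapply isoP_trans; [apply isoP_of with (alphai _ _ _), alphai_iso |].
  eapply isoP_trans;
    [apply isoP_tens; [apply isoP_of with (ci_sigi ci X), cidem_sigi_iso | apply isoP_refl] |].
  apply isoP_of with (alpha _ _ _), alpha_iso.
Qed.

Lemma cid_absorb_l (X : C) : Cid e X -> isoP (e ⊗ X) X.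
Proof.
  intros [Y HY].
  eapply isoP_trans; [apply isoP_tens; [apply isoP_refl | exact HY] |].
  eapply isoP_trans; [apply isoP_of with (alphai _ _ _), alphai_iso |].
  eapply isoP_trans;
    [apply isoP_tens; [apply isoP_of with (ci_Phi ci), cidem_mult_iso | apply isoP_refl] |].
  apply isoP_sym, HY.
Qed.

Lemma cid_absorb_r (X : C) : Cid e X -> isoP (X ⊗ e) X.
Proof.
  intros HX. eapply isoP_trans; [apply isoP_of with (ci_sigi ci X), cidem_sigi_iso |].
  apply cid_absorb_l, HX.
Qed.

Context {I : Type} {M : I -> I -> Type}.

Lemma natiso_cidem_sig (F : diagram M) : natiso (dtens (dconst e) F) (dtens F (dconst e)).
Proof.
  exists (fun i => ci_sig ci (dobj F i)). split; [intros; apply cidem_sig_iso |].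
  intros i j m; simpl. destruct Hci as [_ [_ [Hnat _]]]. apply Hnat.
Qed.

Lemma natiso_cidem_idem (F : diagram M) :
  natiso (dtens (dconst e) (dtens (dconst e) F)) (dtens (dconst e) F).
Proof.
  eapply natiso_trans; [apply natiso_sym, natiso_assoc |].
  apply natiso_tens; [| apply natiso_refl].
  eapply natiso_trans; [apply natiso_const_tens |].
  apply natiso_const, isoP_of with (ci_Phi ci), cidem_mult_iso.
Qed.

Lemma natiso_cidem_swap (A F : diagram M) :
  natiso (dtens (dconst e) (dtens A F)) (dtens A (dtens (dconst e) F)).
Proof.
  eapply natiso_trans; [apply natiso_sym, natiso_assoc |].
  eapply natiso_trans; [apply natiso_tens; [apply natiso_cidem_sig | apply natiso_refl] |].
  apply natiso_assoc.
Qed.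

Lemma natiso_cidem_dup (A F : diagram M) :
  natiso (dtens (dconst e) (dtens A F)) (dtens (dtens (dconst e) A) (dtens (dconst e) F)).
Proof.
  eapply natiso_trans; [apply natiso_sym, natiso_cidem_idem |].
  eapply natiso_trans; [apply natiso_tens; [apply natiso_refl | apply natiso_cidem_swap] |].
  apply natiso_sym, natiso_assoc.
Qed.

Lemma natiso_cidem_distr (F H : diagram M) :
  natiso (dtens (dtens (dconst e) F) (dtens (dconst e) H)) (dtens (dconst e) (dtens F H)).
Proof.
  eapply natiso_trans; [apply natiso_assoc |].
  eapply natiso_trans;
    [apply natiso_tens; [apply natiso_refl | apply natiso_sym, natiso_cidem_swap] |].
  apply natiso_cidem_idem.
Qed.

End CentralIdempotent.

Section PartialAction.
Context {G : Group} {d : PAData C G} (Hd : is_partial_action d).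

Local Notation one := (pa_one d).
Local Notation T := (pa_T d).
Local Notation Tm := (pa_Tm d).
Local Notation Cg x := (Cid (pa_one d x)).

Lemma cid_one x : Cg x (one x).
Proof. exact (cid_unit (pa_ci_ok Hd x)). Qed.

Ltac solve_ideal :=
  first [ apply (cid_in L) | apply cid_one
        | apply cid_tensr; solve_ideal | apply (cid_tensl (pa_ci_ok Hd _)); solve_ideal ].

Lemma Tm_iso k (X Y : C) (wX : Cg (ginv k) X) (wY : Cg (ginv k) Y) (f : Hom X Y) :
  is_iso f -> is_iso (Tm k wX wY f).
Proof.
  intros [g [H1 H2]]. exists (Tm k wY wX g).
  rewrite <- !(pa_Tm_comp Hd), H1, H2, !(pa_Tm_id Hd). split; reflexivity.
Qed.

Lemma isoP_T k (X Y : C) :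
  Cg (ginv k) X -> Cg (ginv k) Y -> isoP X Y -> isoP (T k X) (T k Y).
Proof. intros wX wY [f Hf]. apply isoP_of with (Tm k wX wY f), Tm_iso, Hf. Qed.

(* U := T_k(1_{k^-1} ⊗ 1_m) and Z := 1_k ⊗ 1_{km} absorb each other: U lies in C_k ∩ C_{km},
   and Z ≅ T_k X with X in C_{k^-1} ∩ C_m, so U ⊗ T_k X ≅ T_k((1_{k^-1} ⊗ 1_m) ⊗ X) ≅ T_k X. *)
Lemma T_one_tens_one k m : isoP (T k (one (ginv k) ⊗ one m)) (one k ⊗ one (gmul k m)).
Proof.
  set (U := T k (one (ginv k) ⊗ one m)).
  set (Z := one k ⊗ one (gmul k m)).
  assert (wU1 : Cg (ginv k) (one (ginv k) ⊗ one m)) by solve_ideal.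
  assert (wU2 : Cg m (one (ginv k) ⊗ one m)) by solve_ideal.
  assert (wZ1 : Cg k Z) by solve_ideal.
  assert (wZ2 : Cg (gmul k m) Z) by solve_ideal.
  destruct (pa_restr_esurj Hd wZ1 wZ2) as [X [wX1 [wX2 HXZ]]].
  assert (U_absorbs : isoP (U ⊗ Z) U).
  { assert (wUk : Cg k U) by apply (pa_T_in Hd wU1).
    assert (wUkm : Cg (gmul k m) U) by apply (pa_restr Hd wU1 wU2).
    eapply isoP_trans; [apply isoP_of with (alphai _ _ _), alphai_iso |].
    eapply isoP_trans;
      [apply isoP_tens; [apply (cid_absorb_r (pa_ci_ok Hd k) wUk) | apply isoP_refl] |].
    apply (cid_absorb_r (pa_ci_ok Hd _) wUkm). }
  assert (Z_absorbs : isoP (U ⊗ Z) Z).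
  { eapply isoP_trans; [apply isoP_tens; [apply isoP_refl | apply isoP_sym, HXZ] |].
    eapply isoP_trans; [apply isoP_of with (pa_J d k _ _), (pa_J_iso Hd wU1 wX1) |].
    eapply isoP_trans; [| exact HXZ].
    apply isoP_T; [apply (cid_tensr _ wU1) | exact wX1 |].
    eapply isoP_trans; [apply isoP_of with (alpha _ _ _), alpha_iso |].
    eapply isoP_trans;
      [apply isoP_tens; [apply isoP_refl | apply (cid_absorb_l (pa_ci_ok Hd m) wX2)] |].
    apply (cid_absorb_l (pa_ci_ok Hd _) wX1). }
  eapply isoP_trans; [apply isoP_sym, U_absorbs | exact Z_absorbs].
Qed.

Context {I : Type} {M : I -> I -> Type}.

Definition dT k (F : diagram M) (w : forall i, Cg (ginv k) (dobj F i)) : diagram M :=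
  Diagram (fun i => T k (dobj F i)) (fun i j m => Tm k (w i) (w j) (dmap F m)).

Definition dPhi k (F : diagram M) : diagram M :=
  @dT k (dtens (dconst (one (ginv k))) F) (fun i => cid_in L _ _).

Lemma natiso_dT k F H wF wH : natiso F H -> natiso (@dT k F wF) (@dT k H wH).
Proof.
  intros [eta [Hiso Hnat]]. exists (fun i => Tm k (wF i) (wH i) (eta i)). split.
  - intros; apply Tm_iso, Hiso.
  - intros i j m; simpl. rewrite <- !(pa_Tm_comp Hd), Hnat. reflexivity.
Qed.

Lemma natiso_J k F H wF wH wFH :
  natiso (dtens (@dT k F wF) (@dT k H wH)) (@dT k (dtens F H) wFH).
Proof.
  exists (fun i => pa_J d k (dobj F i) (dobj H i)). split.
  - intros; apply (pa_J_iso Hd); auto.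
  - intros i j m; simpl. apply (pa_J_nat Hd).
Qed.

Lemma natiso_dT_const k (A : C) w : natiso (@dT k (dconst A) w) (dconst (T k A)).
Proof.
  exists (fun _ => idm _). split; [intros; apply iso_id |].
  intros; simpl. rewrite (pa_Tm_id Hd), !(comp_idl L). reflexivity.
Qed.

Lemma natiso_dT_const_tens k (A B : C) w :
  natiso (@dT k (dtens (dconst A) (dconst B)) w) (dconst (T k (A ⊗ B))).
Proof.
  exists (fun _ => idm _). split; [intros; apply iso_id |].
  intros; simpl. rewrite (tensm_id L), (pa_Tm_id Hd), !(comp_idl L). reflexivity.
Qed.

Lemma natiso_gamma x y W w1 w2 w3 (w4 : forall i, Cg (gmul (ginv y) (ginv x)) (dobj W i)) :
  natiso (@dT x (@dT y W w1) w2) (@dT (gmul x y) W w3).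
Proof.
  exists (fun i => pa_gamma d x y (dobj W i)). split.
  - intros; apply (pa_gamma_iso Hd); auto.
  - intros i j m; simpl. symmetry. apply (pa_gamma_nat Hd); auto.
Qed.

Lemma natiso_one_dPhi k F : natiso (dtens (dconst (one k)) (dPhi k F)) (dPhi k F).
Proof.
  eapply natiso_trans.
  { apply natiso_tens; [apply natiso_const, isoP_of with (pa_phi d k), (pa_phi_iso Hd) |].
    apply natiso_refl. }
  eapply natiso_trans.
  { apply natiso_tens; [apply natiso_sym, (natiso_dT_const (fun _ => cid_one _)) |].
    apply natiso_refl. }
  eapply natiso_trans; [unshelve apply natiso_J; intros; apply (cid_in L) |].
  apply natiso_dT, (natiso_cidem_idem (pa_ci_ok Hd _)).
Qed.

Lemma natiso_dPhi_one k F : natiso (dtens (dPhi k F) (dconst (one k))) (dPhi k F).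
Proof.
  eapply natiso_trans; [apply natiso_sym, (natiso_cidem_sig (pa_ci_ok Hd _)) |].
  apply natiso_one_dPhi.
Qed.

Lemma natiso_dT_ones k m n (Hn : gmul k m = n) F w :
  natiso (@dT k (dtens (dtens (dconst (one (ginv k))) (dconst (one m)))
                       (dtens (dconst (one (ginv k))) F)) w)
         (dtens (dconst (one n)) (dPhi k F)).
Proof.
  eapply natiso_trans; [apply natiso_sym; unshelve eapply natiso_J; intros; solve_ideal |].
  eapply natiso_trans.
  { apply natiso_tens; [| apply natiso_refl].
    eapply natiso_trans; [apply natiso_dT_const_tens |].
    apply natiso_const, (isoP_trans (T_one_tens_one k m)). rewrite Hn. apply isoP_refl. }
  eapply natiso_trans.
  { apply natiso_tens; [| apply natiso_refl].
    eapply natiso_trans; [apply natiso_sym, natiso_const_tens |].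
    apply (natiso_cidem_sig (pa_ci_ok Hd _)). }
  eapply natiso_trans; [apply natiso_assoc |].
  apply natiso_tens; [apply natiso_refl | apply natiso_one_dPhi].
Qed.

Lemma natiso_one_inv_dPhi h g (Y : diagram M) w :
  natiso (dtens (dconst (one (ginv h))) (dPhi g Y))
         (@dT g (dtens (dconst (one (ginv g))) (dtens (dconst (one (ginv (gmul h g)))) Y)) w).
Proof.
  apply natiso_sym.
  eapply natiso_trans; [eapply natiso_dT, (natiso_cidem_dup (pa_ci_ok Hd _)) |].
  apply natiso_dT_ones, gmul_ginvM.
  Unshelve. intros; solve_ideal.
Qed.

Lemma natiso_one_dPhi_mul h g (Y : diagram M) :
  natiso (dtens (dconst (one h)) (dPhi (gmul h g) Y)) (dPhi h (dPhi g Y)).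
Proof.
  set (W := dtens (dconst (one (ginv g))) (dtens (dconst (one (ginv (gmul h g)))) Y)).
  assert (wW : forall i, Cg (ginv g) (dobj W i)) by (intros; solve_ideal).
  assert (wW' : forall i, Cg (ginv (gmul h g)) (dobj W i)) by (intros; solve_ideal).
  assert (wTW : forall i, Cg (ginv h) (T g (dobj W i))).
  { intros i. rewrite <- (gmul_ginvM h g). apply (pa_restr Hd (wW i) (wW' i)). }
  assert (wW'' : forall i, Cg (gmul (ginv g) (ginv h)) (dobj W i)).
  { intros i. rewrite <- ginvM. apply wW'. }
  apply natiso_sym.
  eapply natiso_trans; [apply (natiso_dT (H := @dT g W wW) _ wTW), natiso_one_inv_dPhi |].
  eapply natiso_trans; [apply (natiso_gamma _ wW' wW'') |].
  eapply natiso_trans.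
  { eapply (natiso_dT wW').
    eapply natiso_trans; [apply (natiso_cidem_swap (pa_ci_ok Hd _)) |].
    apply (natiso_cidem_dup (pa_ci_ok Hd _)). }
  apply natiso_dT_ones, gmulK.
  Unshelve. intros; solve_ideal.
Qed.

Lemma natiso_dPhi_tens_mul h g (X Y : diagram M) :
  natiso (dtens (dPhi h X) (dPhi (gmul h g) Y)) (dPhi h (dtens X (dPhi g Y))).
Proof.
  eapply natiso_trans;
    [apply natiso_tens; [apply natiso_sym, natiso_dPhi_one | apply natiso_refl] |].
  eapply natiso_trans; [apply natiso_assoc |].
  eapply natiso_trans;
    [apply natiso_tens; [apply natiso_refl | apply natiso_one_dPhi_mul] |].
  eapply natiso_trans; [eapply natiso_J |].
  apply natiso_dT, (natiso_cidem_distr (pa_ci_ok Hd _)).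
  Unshelve. all: intros; solve_ideal.
Qed.

Lemma natiso_dPhi_mul_tens h g (X Y : diagram M) :
  natiso (dtens (dPhi (gmul h g) X) (dPhi h Y)) (dPhi h (dtens (dPhi g X) Y)).
Proof.
  eapply natiso_trans;
    [apply natiso_tens; [apply natiso_refl | apply natiso_sym, natiso_one_dPhi] |].
  eapply natiso_trans; [apply natiso_sym, natiso_assoc |].
  eapply natiso_trans;
    [apply natiso_tens; [apply natiso_sym, (natiso_cidem_sig (pa_ci_ok Hd _)) |];
     apply natiso_refl |].
  eapply natiso_trans;
    [apply natiso_tens; [apply natiso_one_dPhi_mul | apply natiso_refl] |].
  eapply natiso_trans; [eapply natiso_J |].
  apply natiso_dT, (natiso_cidem_distr (pa_ci_ok Hd _)).
  Unshelve. all: intros; solve_ideal.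
Qed.

End PartialAction.
End Monoidal.

Theorem lemma5p2 (C : MonCat) (L : is_moncat C) (HS : strict C) (G : Group)
  (d : PAData C G) (Hd : is_partial_action d) :
  (forall g : G,
     nat_iso2 (fun X Y => bul (PhiO d X) (TT g (PhiO d Y)))
              (fun X Y => PhiO d (X ⊗ PhiO d Y g))
              (fun X X' Y Y' f f' => bulm (PhiM d L f) (TTm g (PhiM d L f')))
              (fun X X' Y Y' f f' => PhiM d L (f ⊗ₘ PhiM d L f' g))
     /\
     nat_iso2 (fun X Y => bul (TT g (PhiO d X)) (PhiO d Y))
              (fun X Y => PhiO d (PhiO d X g ⊗ Y))
              (fun X X' Y Y' f f' => bulm (TTm g (PhiM d L f)) (PhiM d L f'))
              (fun X X' Y Y' f f' => PhiM d L (PhiM d L f g ⊗ₘ f'))) /\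
  (forall g h : G,
     nat_iso2 (fun X Y => bul (TT g (PhiO d X)) (TT h (PhiO d Y)))
              (fun X Y => TT g (PhiO d (X ⊗ PhiO d Y (gmul (ginv g) h))))
              (fun X X' Y Y' f f' => bulm (TTm g (PhiM d L f)) (TTm h (PhiM d L f')))
              (fun X X' Y Y' f f' =>
                 TTm g (PhiM d L (f ⊗ₘ PhiM d L f' (gmul (ginv g) h))))).
Proof.
  split; [intro g; split | intros g h]; apply nat_iso2_of_natiso; intro k.
  - exact (natiso_dPhi_tens_mul L Hd k g dfst dsnd).
  - exact (natiso_dPhi_mul_tens L Hd k g dfst dsnd).
  - pose proof (natiso_dPhi_tens_mul L Hd (gmul k g) (gmul (ginv g) h) dfst dsnd) as Hkg.
    rewrite <- gmul_split in Hkg. exact Hkg.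
Qed.
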